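(* Let $\mathcal E$ be a nest on a complex Banach space $X$ and let $\mathcal J$ be a $\mathcal T(\mathcal E)$-bimodule with essential support function $\Phi^e_{\mathcal J}$. Let $L,N\in\mathcal E$ be such that $L_-\subsetneq\Phi^e_{\mathcal J}(N)$. Then for every $f\in(N_-)^\perp$ and every $x\in L$, the operator $f\otimes x$ lies in $\mathcal J$.
   Context: A nest $\mathcal E$ on $X$ is a family of closed linear subspaces of $X$, totally ordered by inclusion, containing $\{0\}$ and $X$, closed under arbitrary meets $\wedge$ (intersections) and joins $\vee$ (norm-closed linear spans of unions). For $E\in\mathcal E$, $E_-=\vee\{F\in\mathcal E: F\subsetneq E\}$. $\mathcal T(\mathcal E)=\{T\in\mathcal B(X): TE\subseteq E\ \forall E\in\mathcal E\}$. A $\mathcal T(\mathcal E)$-bimodule is a linear subspace $\mathcal J\subseteq\mathcal B(X)$ with $\mathcal T(\mathcal E)\mathcal J\subseteq\mathcal J$ and $\mathcal J\mathcal T(\mathcal E)\subseteq\mathcal J$. For linear subspaces $M,L$ of $X$ with $L$ closed, $M/L$ denotes $\{m+L: m\in M\}\subseteq X/L$ and $\dim(M/L)$ its (algebraic) dimension. The essential support function of $\mathcal J$ is $\Phi^e_{\mathcal J}(N)=\wedge\{L\in\mathcal E: \dim(TN/L)<\infty\ \forall T\in\mathcal J\}$ for $N\in\mathcal E$. For $S\subseteq X$, $S^\perp=\{f\in X^*: f(S)=\{0\}\}$; $f\otimes x$ is the operator $y\mapsto f(y)x$. *)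

From HB Require Import structures.
From mathcomp Require Import all_boot all_order all_algebra.
From mathcomp Require Import complex.
From mathcomp Require Import all_classical all_reals all_analysis.
Set Implicit Arguments. Unset Strict Implicit. Unset Printing Implicit Defensive.
Import Order.TTheory GRing.Theory Num.Theory.
Import numFieldNormedType.Exports.
Local Open Scope classical_set_scope.
Local Open Scope ring_scope.

(* Complex Banach space: X : completeNormedModType (R[i]) for R : realType. *)
Section Nests.
Context {K : numFieldType} {X : normedModType K}.

Definition subspace (M : set X) : Prop :=
  M 0 /\ (forall (a : K) (u v : X), M u -> M v -> M (a *: u + v)).

Definition csubspace (M : set X) : Prop := subspace M /\ closed M.

Definition cspan (S : set X) : set X :=
  \bigcap_(M in [set M : set X | csubspace M /\ S `<=` M]) M.

Definition fam_meet (F : set (set X)) : set X := \bigcap_(M in F) M.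
Definition fam_join (F : set (set X)) : set X := cspan (\bigcup_(M in F) M).

Definition is_nest (E : set (set X)) : Prop :=
  [/\ (forall M, E M -> csubspace M),
      (forall M1 M2, E M1 -> E M2 -> M1 `<=` M2 \/ M2 `<=` M1),
      E [set 0] /\ E setT,
      (forall F, F `<=` E -> E (fam_meet F)) &
      (forall F, F `<=` E -> E (fam_join F))].

Definition nest_minus (E : set (set X)) (M : set X) : set X :=
  fam_join [set F | E F /\ F `<` M].

(* bounded (= continuous) linear operators on X *)
Definition is_linear_map (T : X -> X) : Prop :=
  forall (a : K) (u v : X), T (a *: u + v) = a *: T u + T v.
Definition bounded_op (T : X -> X) : Prop := is_linear_map T /\ continuous T.

Definition dual_elt (f : X -> K) : Prop :=
  (forall (a : K) (u v : X), f (a *: u + v) = a * f u + f v) /\ continuous f.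

Definition annihilator (S : set X) : set (X -> K) :=
  [set f | dual_elt f /\ forall y, S y -> f y = 0].

Definition rank_one (f : X -> K) (x : X) : X -> X := fun y => f y *: x.

Definition nest_alg (E : set (set X)) : set (X -> X) :=
  [set T | bounded_op T /\ forall M, E M -> forall y, M y -> M (T y)].

Definition is_bimodule (E : set (set X)) (J : set (X -> X)) : Prop :=
  [/\ J `<=` bounded_op,
      J (fun _ => 0),
      (forall (a : K) (S1 S2 : X -> X), J S1 -> J S2 ->
         J (fun y => a *: S1 y + S2 y)),
      (forall T S, nest_alg E T -> J S -> J (T \o S)) &
      (forall T S, nest_alg E T -> J S -> J (S \o T))].

(* dim (M / L) < oo (algebraic dimension of {m + L : m in M} in X/L):
   M/L is spanned by the classes of finitely many vectors *)
Definition fin_dim_quot (M L : set X) : Prop :=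
  exists s : seq X, forall y, M y ->
    exists c : 'I_(size s) -> K, L (y - \sum_(i < size s) c i *: s`_i).

Definition ess_support (E : set (set X)) (J : set (X -> X)) (N : set X) : set X :=
  fam_meet [set L | E L /\ forall T, J T -> fin_dim_quot (T @` N) L].

End Nests.

(* Let L_- be strictly below Phi^e_J(N). Then L_- is not in the family whose meet
   defines Phi^e_J(N), so some T in J maps some u in N outside L_-. By Hahn-Banach
   there is g in (L_-)^perp with g(Tu) <> 0. For f in (N_-)^perp and x in L, the
   rank-one operators g (x) x and f (x) u lie in the nest algebra T(E), hence
     (g (x) x) T (f (x) u) = g(Tu) f (x) x
   lies in the bimodule J, and so does f (x) x. *)

From Pilot Require Import Defs.
From HB Require Import structures.
From mathcomp Require Import all_boot all_order all_algebra.
From mathcomp Require Import complex.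
From mathcomp Require Import all_classical all_reals all_analysis.
From mathcomp Require Import ring lra.
Set Implicit Arguments.
Unset Strict Implicit.
Unset Printing Implicit Defensive.
Import Order.TTheory GRing.Theory Num.Theory.
Import numFieldNormedType.Exports.
Local Open Scope classical_set_scope.
Local Open Scope ring_scope.
Local Open Scope complex_scope.

Section NestAlgebra.
Context {K : numFieldType} {X : normedModType K}.
Implicit Types (M S : set X) (E : set (set X)) (J : set (X -> X)).

Lemma subspace0 M : Defs.subspace M -> M 0.
Proof. by rewrite /Defs.subspace => -[]. Qed.

Lemma subspaceZ M a u : Defs.subspace M -> M u -> M (a *: u).
Proof. by rewrite /Defs.subspace => -[M0 ML] Mu; rewrite -[_ *: _]addr0; apply: ML. Qed.

Lemma subspaceD M u v : Defs.subspace M -> M u -> M v -> M (u + v).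
Proof. by rewrite /Defs.subspace => -[_ ML] Mu Mv; rewrite -[u]scale1r; exact: ML. Qed.

Lemma subspaceN M u : Defs.subspace M -> M u -> M (- u).
Proof. by move=> HM Mu; rewrite -scaleN1r; exact: subspaceZ. Qed.

Lemma linear_mapZ (T : X -> X) a u : is_linear_map T -> T (a *: u) = a *: T u.
Proof.
move=> TL; have T0 : T 0 = 0.
  have T00 := TL 1 0 0; rewrite !scale1r addr0 in T00.
  by apply: (addrI (T 0)); rewrite addr0 -T00.
by have := TL a u 0; rewrite !addr0 T0 addr0.
Qed.

Lemma dual_eltZ (f : X -> K) a u : dual_elt f -> f (a *: u) = a * f u.
Proof.
move=> [fL _]; have f0 : f 0 = 0.
  have f00 := fL 1 0 0; rewrite scale1r addr0 mul1r in f00.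
  by apply: (addrI (f 0)); rewrite addr0 -f00.
by have := fL a u 0; rewrite !addr0 f0 addr0.
Qed.

Lemma sub_cspan S : S `<=` cspan S.
Proof. by move=> y Sy M [_ SM]; exact: SM. Qed.

Lemma nest_minus_mem E M : is_nest E -> E (nest_minus E M).
Proof. by case=> _ _ _ _ Ejoin; apply: Ejoin => F []. Qed.

Lemma proper_sub_nest_minus E M M' : E M' -> M' `<` M -> M' `<=` nest_minus E M.
Proof. by move=> EM' ltM'M y M'y; apply: sub_cspan; exists M'. Qed.

(* f (x) w belongs to T(E) when w lies in a member M of E and f kills M_-:
   a member of E either contains M, or lies strictly below M and is killed by f *)
Lemma rank_one_nest_alg E M (f : X -> K) w : is_nest E -> E M ->
  annihilator (nest_minus E M) f -> M w -> nest_alg E (rank_one f w).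
Proof.
move=> [Ecs Etot _ _ _] EM [[fL fC] fM] Mw; split.
  split; first by move=> a u v; rewrite /rank_one fL scalerDl scalerA.
  by move=> y; apply: continuousZr_tmp; exact: fC.
move=> M' EM' y M'y; have [HM' _] := Ecs _ EM'; rewrite /rank_one.
have [MM'|nMM'] := pselect (M `<=` M').
  by apply: subspaceZ => //; exact: MM'.
have ltM'M : M' `<` M by split => //; case: (Etot _ _ EM EM') => // /nMM'.
rewrite fM ?scale0r; first exact: subspace0.
exact: proper_sub_nest_minus EM' ltM'M _ M'y.
Qed.

Lemma bimoduleZ E J (S : X -> X) a : is_bimodule E J -> J S -> J (fun y => a *: S y).
Proof.
move=> [_ J0 Jlin _ _] JS.
have -> : (fun y => a *: S y) = (fun y => a *: S y + 0) by apply: funext => y; rewrite addr0.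
exact: Jlin.
Qed.

Lemma rank_one_sandwich (T : X -> X) (f g : X -> K) x u :
  is_linear_map T -> dual_elt g ->
  rank_one g x \o (T \o rank_one f u) = (fun y => g (T u) *: rank_one f x y).
Proof.
move=> TL gd; apply: funext => y.
by rewrite /rank_one /= linear_mapZ // dual_eltZ // !scalerA mulrC.
Qed.

(* if a member M of E lies strictly below Phi^e_J(N), some T in J moves some u
   in N outside M: otherwise M would be one of the members whose meet is Phi^e_J(N) *)
Lemma ess_support_witness E J M N : E M -> M `<` ess_support E J N ->
  exists2 T, J T & exists2 u, N u & ~ M (T u).
Proof.
move=> EM [_ not_sub]; apply: contrapT => noT; apply: not_sub => y ess_y.
apply: ess_y; split=> // T JT; exists [::] => _ [u Nu <-].
exists (fun _ => 0); rewrite big_ord0 subr0.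
by apply: contrapT => nMTu; apply: noT; exists T => //; exists u.
Qed.
End NestAlgebra.

Section RealFunctionals.
Variables (R : realType) (V : lmodType R[i]).

Definition real_linear (phi : V -> R) : Prop :=
  forall (r : R) x y, phi (r%:C *: x + y) = r * phi x + phi y.

(* the complex functional whose real part is phi *)
Definition complexify (phi : V -> R) (x : V) : R[i] :=
  (phi x)%:C - 'i * (phi ('i *: x))%:C.

Variables (phi : V -> R).
Hypothesis phiL : real_linear phi.

Lemma real_linearD x y : phi (x + y) = phi x + phi y.
Proof. by have := phiL 1 x y; rewrite rmorph1 scale1r mul1r. Qed.

Lemma real_linearZ (r : R) x : phi (r%:C *: x) = r * phi x.
Proof.
have phi0 : phi 0 = 0.
  by apply: (addrI (phi 0)); rewrite addr0 -real_linearD addr0.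
by rewrite -[_ *: _]addr0 phiL phi0 addr0.
Qed.

Lemma real_linearN x : phi (- x) = - phi x.
Proof. by rewrite -scaleN1r -(rmorphN1 (real_complex R)) real_linearZ mulN1r. Qed.

Lemma scale_complex (a1 a2 : R) (u : V) :
  (a1 +i* a2) *: u = a1%:C *: u + a2%:C *: ('i *: u).
Proof.
rewrite scalerA -scalerDl; congr (_ *: u).
by apply/eqP; rewrite eq_complex /=; apply/andP; split; apply/eqP; ring.
Qed.

Lemma complexify_linear (a : R[i]) (u v : V) :
  complexify phi (a *: u + v) = a * complexify phi u + complexify phi v.
Proof.
case: a => a1 a2; have i_scale : 'i *: ((a1 +i* a2) *: u) = a1%:C *: ('i *: u) + (- a2)%:C *: u.
  rewrite !scalerA -scalerDl; congr (_ *: u).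
  by apply/eqP; rewrite eq_complex /=; apply/andP; split; apply/eqP; ring.
rewrite /complexify scalerDr !real_linearD i_scale scale_complex !real_linearD !real_linearZ.
by apply/eqP; rewrite eq_complex /=; apply/andP; split; apply/eqP; ring.
Qed.
End RealFunctionals.

Section RealHahnBanach.
(* Hahn-Banach for real-linear functionals on a complex vector space V dominated
   by a sublinear p. Partial functionals are represented by their graphs in V * R,
   so that Zorn's lemma on sets applies; one extension step adds one vector. *)
Variables (R : realType) (V : lmodType R[i]) (p : V -> R).
Hypothesis p_add : forall x y, p (x + y) <= p x + p y.
Hypothesis p_scale : forall (r : R) x, 0 < r -> p (r%:C *: x) = r * p x.

Definition dominated_graph (G : set (V * R)) : Prop :=
  [/\ (forall x s t, G (x, s) -> G (x, t) -> s = t),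
      (forall (r : R) x s y t, G (x, s) -> G (y, t) -> G (r%:C *: x + y, r * s + t)) &
      (forall x s, G (x, s) -> s <= p x)].

(* the defining properties only involve two points of the graph at a time *)
Lemma dominated_graph_pairs (U : set (V * R)) :
  (forall q1 q2, U q1 -> U q2 -> exists2 G, dominated_graph G /\ G `<=` U & G q1 /\ G q2) ->
  dominated_graph U.
Proof.
move=> pairs; split.
- by move=> x s t U1 U2; have [G [[Gfun _ _] _] [G1 G2]] := pairs _ _ U1 U2; exact: Gfun G1 G2.
- move=> r x s y t U1 U2; have [G [[_ Glin _] GU] [G1 G2]] := pairs _ _ U1 U2.
  by apply: GU; exact: Glin.
- by move=> x s U1; have [G [[_ _ Gp] _] [G1 _]] := pairs _ _ U1 U1; exact: Gp.
Qed.

Section OneStepExtension.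
Variables (D : set (V * R)) (y : V).
Hypotheses (domD : dominated_graph D) (D00 : D (0, 0)).

Lemma graph_scale (r : R) {x s} : D (x, s) -> D (r%:C *: x, r * s).
Proof. by case: domD => _ Dlin _ Dxs; have := Dlin r _ _ _ _ Dxs D00; rewrite !addr0. Qed.

(* an admissible value c at y: s - p (x - y) <= c <= p (x + y) - s on D; it exists
   because s1 + s2 <= p (x1 + x2) <= p (x1 - y) + p (x2 + y) *)
Lemma extension_value : exists c : R,
  (forall x s, D (x, s) -> s - p (x - y) <= c) /\
  (forall x s, D (x, s) -> c <= p (x + y) - s).
Proof.
have [_ Dlin Dp] := domD.
have gap x1 s1 x2 s2 : D (x1, s1) -> D (x2, s2) -> s1 - p (x1 - y) <= p (x2 + y) - s2.
  move=> D1 D2; have := Dp _ _ (Dlin 1 _ _ _ _ D1 D2); rewrite scale1r mul1r.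
  have := p_add (x1 - y) (x2 + y); rewrite addrACA addNr addr0; lra.
pose S := [set v | exists x s, D (x, s) /\ v = s - p (x - y)].
have supS : has_sup S.
  split; first by exists (0 - p (0 - y)), 0, 0.
  by exists (p (0 + y) - 0) => _ [x [s [Dxs ->]]]; exact: gap Dxs D00.
exists (sup S); split=> [x s Dxs|x s Dxs].
  by apply: sup_upper_bound => //; exists x, s.
apply: ge_sup; first by case: supS.
by move=> _ [x1 [s1 [D1 ->]]]; exact: gap D1 Dxs.
Qed.

Lemma extension_dominated_pos (c : R) (w : V) :
  (forall x s, D (x, s) -> c <= p (x + w) - s) ->
  forall (r : R) x s, 0 < r -> D (x, s) -> s + r * c <= p (x + r%:C *: w).
Proof.
move=> c_le r x s r0 Dxs; have := c_le _ _ (graph_scale (r^-1) Dxs).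
have -> : x + r%:C *: w = r%:C *: ((r^-1)%:C *: x + w).
  by rewrite scalerDr scalerA -rmorphM /= mulfV ?gt_eqF // scale1r.
rewrite p_scale //; set P := p _ => le_c.
have : r * c <= r * (P - r^-1 * s) by rewrite ler_pM2l.
rewrite mulrBr mulrA mulfV ?gt_eqF // mul1r; lra.
Qed.

Definition graph_extension (c : R) : set (V * R) :=
  [set q | exists x s (r : R), D (x, s) /\ q = (x + r%:C *: y, s + r * c)].

Lemma sub_graph_extension c : D `<=` graph_extension c.
Proof.
by move=> [x s] Dxs; exists x, s, 0; rewrite rmorph0 scale0r mul0r !addr0.
Qed.

Lemma graph_extension_at c : graph_extension c (y, c).
Proof. by exists 0, 0, 1; rewrite rmorph1 scale1r mul1r !add0r. Qed.

Lemma graph_extension_dominated c : ~ (exists s, D (y, s)) ->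
  (forall x s, D (x, s) -> s - p (x - y) <= c) ->
  (forall x s, D (x, s) -> c <= p (x + y) - s) ->
  dominated_graph (graph_extension c).
Proof.
have [Dfun Dlin Dp] := domD; move=> Dy c_ge c_le; split.
- move=> _ s t [x1 [s1 [r1 [D1 [-> ->]]]]] [x2 [s2 [r2 [D2 []]]]] e12 ->.
  have [r12|r12] := eqVneq r1 r2.
    rewrite r12 in e12 *; have x12 : x1 = x2 by apply: (addIr (r2%:C *: y)).
    by rewrite x12 in D1; rewrite (Dfun _ _ _ D1 D2).
  (* two distinct values at the same point would put y in the domain of D *)
  exfalso; apply: Dy; exists ((r1 - r2)^-1 * (- s1 + s2)).
  have dx : x2 - x1 = (r1 - r2)%:C *: y.
    rewrite -(addrK (r2%:C *: y) x2) -e12 addrAC [x1 + _]addrC addrK.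
    by rewrite rmorphB scalerBl.
  have -> : y = ((r1 - r2)^-1)%:C *: (x2 - x1).
    by rewrite dx scalerA -rmorphM /= mulVf ?scale1r // subr_eq0.
  apply: graph_scale; have := Dlin (-1) _ _ _ _ D1 D2.
  by rewrite (rmorphN1 (real_complex R)) scaleN1r mulN1r addrC [- s1 + _]addrC.
- move=> r _ _ _ _ [x1 [s1 [r1 [D1 [-> ->]]]]] [x2 [s2 [r2 [D2 [-> ->]]]]].
  exists (r%:C *: x1 + x2), (r * s1 + s2), (r * r1 + r2); split; first exact: Dlin.
  congr (_, _); last by ring.
  by rewrite rmorphD rmorphM /= scalerDl scalerDr -scalerA addrACA.
- move=> _ _ [x [s [r [Dxs [-> ->]]]]].
  have [r_neg|r_pos|->] := ltgtP r 0; last by rewrite rmorph0 scale0r mul0r !addr0; exact: Dp.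
    (* negative multiples of y are positive multiples of - y *)
    have := @extension_dominated_pos (- c) (- y) _ (- r) x s _ Dxs.
    rewrite rmorphN scaleNr scalerN opprK mulrNN; apply; last by rewrite oppr_gt0.
    by move=> x' s' D'; have := c_ge _ _ D'; lra.
  exact: extension_dominated_pos.
Qed.
End OneStepExtension.

Section ZornExtension.
Variable G0 : set (V * R).
Hypotheses (domG0 : dominated_graph G0) (G000 : G0 (0, 0)).

(* extensions of G0 are encoded by what they add to G0, so that the empty
   chain of Zorn's lemma is harmless *)
Definition base_extension (A : set (V * R)) : Prop := dominated_graph (G0 `|` A).

Lemma base_extension_chain (F : set (set (V * R))) :
  F `<=` base_extension -> total_on F subset -> base_extension (\bigcup_(A in F) A).
Proof.
move=> Fext Ftot; apply: dominated_graph_pairs => q1 q2 Uq1 Uq2.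
have sub_union A : F A -> G0 `|` A `<=` G0 `|` \bigcup_(A in F) A.
  by move=> FA q [G0q|Aq]; [left|right; exists A].
case: Uq1 => [G1|[A1 FA1 A1q]]; case: Uq2 => [G2|[A2 FA2 A2q]].
- by exists G0; split=> // q G0q; left.
- by exists (G0 `|` A2); split; [exact: Fext|exact: sub_union|left|right].
- by exists (G0 `|` A1); split; [exact: Fext|exact: sub_union|right|left].
- have [A12|A21] := Ftot _ _ FA1 FA2.
  + by exists (G0 `|` A2); split; [exact: Fext|exact: sub_union|right; exact: A12|right].
  + by exists (G0 `|` A1); split; [exact: Fext|exact: sub_union|right|right; exact: A21].
Qed.

(* a maximal extension is defined everywhere, by the one-step extension *)
Lemma maximal_extension_total A : base_extension A ->
  (forall B, A `<` B -> ~ base_extension B) -> forall y, exists s, (G0 `|` A) (y, s).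
Proof.
move=> extA maxA y; apply: contrapT => Dy.
have D00 : (G0 `|` A) (0, 0) by left.
have [c [c_ge c_le]] := extension_value y extA D00.
apply: (maxA (A `|` graph_extension (G0 `|` A) y c)).
  split=> [q Aq|sub]; first by left.
  by apply: Dy; exists c; right; apply: sub; right; exact: graph_extension_at.
rewrite /base_extension.
have -> : G0 `|` (A `|` graph_extension (G0 `|` A) y c) = graph_extension (G0 `|` A) y c.
  apply/seteqP; split=> [q [G0q|[Aq|//]]|q ext_q]; last by right; right.
    by apply: sub_graph_extension; left.
  by apply: sub_graph_extension; right.
exact: graph_extension_dominated.
Qed.

Theorem hahn_banach_real : exists phi : V -> R,
  [/\ real_linear phi, (forall x, phi x <= p x) & (forall x s, G0 (x, s) -> phi x = s)].
Proof.
have [A [extA maxA]] := Zorn_bigcup base_extension_chain.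
have [phi phiA] := choice (maximal_extension_total extA maxA).
have [Dfun Dlin Dp] := extA.
exists phi; split=> [r x y||x s G0xs]; last by apply: Dfun (phiA x) _; left.
  by apply: Dfun (phiA _) _; exact: Dlin.
by move=> x; exact: Dp (phiA x).
Qed.
End ZornExtension.
End RealHahnBanach.

Section Separation.
Variables (R : realType) (X : normedModType R[i]).

Definition real_norm (x : X) : R := complex.Re `|x|.

Lemma real_normE x : `|x| = (real_norm x)%:C.
Proof.
by rewrite /real_norm; have := ger0_Im (normr_ge0 x); case: (`|x|) => a b /= ->.
Qed.

Lemma real_norm_ge0 x : 0 <= real_norm x.
Proof. by rewrite -ler0c -real_normE. Qed.

Lemma real_normD x y : real_norm (x + y) <= real_norm x + real_norm y.
Proof. by rewrite -lecR rmorphD /= -!real_normE ler_normD. Qed.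

Lemma real_normZ (a : R[i]) x : real_norm (a *: x) = complex.Re `|a| * real_norm x.
Proof.
rewrite /real_norm normrZ; case: (`|a|) (ger0_Im (normr_ge0 a)) => a1 a2 /= ->.
by case: (`|x|) => x1 x2 /=; rewrite mul0r subr0.
Qed.

Lemma real_norm_pos_scale (r : R) x : 0 < r -> real_norm (r%:C *: x) = r * real_norm x.
Proof. by move=> r0; rewrite real_normZ normc_def /= expr0n addr0 sqrtr_sqr gtr0_norm. Qed.

Section DistanceFunctional.
(* z at distance at least d > 0 from the subspace M: the functional m + t z |-> d t
   on M + R z is dominated by the norm *)
Variables (M : set X) (z : X) (d : R).
Hypotheses (HM : Defs.subspace M) (d0 : 0 < d)
  (dist_z : forall m, M m -> d <= real_norm (z - m)).

Definition distance_graph : set (X * R) :=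
  [set q | exists m (t : R), M m /\ q = (m + t%:C *: z, d * t)].

Lemma distance_graph_dominated : dominated_graph real_norm distance_graph.
Proof.
split.
- move=> _ s t [m1 [t1 [M1 [-> ->]]]] [m2 [t2 [M2 []]]] e12 ->; congr (d * _).
  apply: contrapT => /eqP t12; have : ~ M z.
    move=> Mz; have := dist_z Mz; rewrite subrr -lecR -real_normE normr0.
    by rewrite -(rmorph0 (real_complex R)) lecR leNgt d0.
  have dm : m2 - m1 = (t1 - t2)%:C *: z.
    rewrite -(addrK (t2%:C *: z) m2) -e12 addrAC [m1 + _]addrC addrK.
    by rewrite rmorphB scalerBl.
  apply; have -> : z = ((t1 - t2)^-1)%:C *: (m2 - m1).
    by rewrite dm scalerA -rmorphM /= mulVf ?scale1r // subr_eq0.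
  by apply: subspaceZ => //; apply: subspaceD => //; exact: subspaceN.
- move=> r _ _ _ _ [m1 [t1 [M1 [-> ->]]]] [m2 [t2 [M2 [-> ->]]]].
  exists (r%:C *: m1 + m2), (r * t1 + t2); split; first by case: HM => _; apply.
  congr (_, _); last by ring.
  by rewrite rmorphD rmorphM /= scalerDl scalerDr -scalerA addrACA.
- move=> _ _ [m [t [Mm [-> ->]]]].
  have [t_le0|t_gt0] := leP t 0.
    by apply: le_trans (real_norm_ge0 _); rewrite pmulr_rle0.
  have -> : m + t%:C *: z = t%:C *: (z - ((- t^-1)%:C *: m)).
    rewrite scalerDr scalerN scalerA -rmorphM /= mulrN mulfV ?gt_eqF //.
    by rewrite rmorphN rmorph1 scaleN1r opprK addrC.
  rewrite real_norm_pos_scale // mulrC ler_pM2l //.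
  by apply: dist_z; exact: subspaceZ.
Qed.

Lemma distance_functional : exists phi : X -> R,
  [/\ real_linear phi, (forall x, phi x <= real_norm x),
      (forall m, M m -> phi m = 0) & phi z = d].
Proof.
have G000 : distance_graph (0, 0).
  by exists 0, 0; split; [exact: subspace0|rewrite rmorph0 scale0r addr0 mulr0].
have [phi [phiL phi_le phiG]] :=
  hahn_banach_real real_normD real_norm_pos_scale distance_graph_dominated G000.
exists phi; split=> // [m Mm|].
  rewrite (phiG m (d * 0)) ?mulr0 //.
  by exists m, 0; split=> //; rewrite rmorph0 scale0r addr0 mulr0.
rewrite (phiG z (d * 1)) ?mulr1 //; exists 0, 1.
by split; [exact: subspace0|rewrite rmorph1 add0r scale1r mulr1].
Qed.
End DistanceFunctional.

Section Complexification.
(* a real-linear functional dominated by the norm complexifies to a bounded,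
   hence continuous, complex-linear functional *)
Variable phi : X -> R.
Hypotheses (phiL : real_linear phi) (phi_le : forall x, phi x <= real_norm x).

(* domination by the norm also bounds |phi|, as real_norm (- x) = real_norm x *)
Lemma real_functional_abs x : `|phi x| <= real_norm x.
Proof.
have [phi_ge0|phi_lt0] := leP 0 (phi x); first by rewrite ger0_norm.
have -> : real_norm x = real_norm (- x) by rewrite /real_norm normrN.
by rewrite ltr0_norm // -real_linearN.
Qed.

Lemma complexify_bound w : `|complexify phi w| <= (2 * real_norm w)%:C.
Proof.
have norm_i : `|'i : R[i]| = 1 by rewrite normc_def /= expr0n /= add0r expr1n sqrtr1.
have norm_real (t : R) : `|t%:C| = `|t|%:C.
  by rewrite normc_def /= expr0n /= addr0 sqrtr_sqr.
rewrite /complexify; apply: le_trans (ler_normB _ _) _.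
rewrite normrM norm_i mul1r !norm_real -rmorphD lecR.
have := real_functional_abs w; have := real_functional_abs ('i *: w).
rewrite real_normZ norm_i /=; lra.
Qed.

Lemma complexify_dual : dual_elt (complexify phi).
Proof.
split; first exact: complexify_linear.
move=> x; apply/cvgrPdist_lt => e e0; near=> y.
have -> : complexify phi x - complexify phi y = complexify phi (x - y).
  have -> : x - y = (-1) *: y + x by rewrite scaleN1r addrC.
  by rewrite complexify_linear // mulN1r addrC.
apply: le_lt_trans (complexify_bound _) _.
rewrite rmorphM /= -real_normE -ltr_pdivlMl; last by rewrite ltcR.
near: y; apply: cvgr_dist_lt; first exact: cvg_id.
by rewrite mulr_gt0 // invr_gt0 ltcR.
Unshelve. all: by end_near.
Qed.
End Complexification.

Lemma separating_functional (M : set X) (z : X) : csubspace M -> ~ M z ->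
  exists g : X -> R[i], [/\ dual_elt g, (forall m, M m -> g m = 0) & g z != 0].
Proof.
move=> [HM closedM] Mz.
have : nbhs z (~` M) by have := closed_openC closedM; rewrite openE; apply.
case/nbhs_ballP => e e0 ball_notM.
have eE : e = (complex.Re e)%:C.
  by have := ger0_Im (ltW e0); case: (e) => a b /= ->.
have d0 : 0 < complex.Re e by rewrite -ltcR -eE.
have dist_z m : M m -> complex.Re e <= real_norm (z - m).
  move=> Mm; rewrite leNgt; apply/negP => lt_e; apply: (ball_notM m) => //.
  by rewrite -ball_normE /ball_ /= real_normE eE ltcR.
have [phi [phiL phi_le phiM phiz]] := distance_functional HM d0 dist_z.
exists (complexify phi); split; first exact: complexify_dual.
  by move=> m Mm; rewrite /complexify !phiM ?rmorph0 ?mulr0 ?subr0 //; exact: subspaceZ.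
rewrite /complexify phiz; apply/negP => /eqP/eqP; rewrite eq_complex /= => /andP[].
by rewrite !mul0r mulr0 !subr0 => /eqP d_eq0; move: d0; rewrite d_eq0 ltxx.
Qed.
End Separation.

Theorem mainTheorem13 (R : realType) (X : completeNormedModType R[i])
  (E : set (set X)) (J : set (X -> X)) (L N : set X) :
  is_nest E -> is_bimodule E J -> E L -> E N ->
  nest_minus E L `<` ess_support E J N ->
  forall (f : X -> R[i]) (x : X),
    annihilator (nest_minus E N) f -> L x -> J (rank_one f x).
Proof.
move=> nestE bimodJ EL EN lt_ess f x fN Lx.
have EL_ := nest_minus_mem L nestE.
have [T JT [u Nu nTu]] := ess_support_witness EL_ lt_ess.
have [csE _ _ _ _] := nestE.
have [g [g_dual gL gTu]] := separating_functional (csE _ EL_) nTu.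
have gx_alg : nest_alg E (rank_one g x) by apply: (rank_one_nest_alg nestE EL).
have fu_alg : nest_alg E (rank_one f u) := rank_one_nest_alg nestE EN fN Nu.
have [Jbounded _ _ JlT JrT] := bimodJ.
have J_sandwich := JlT _ _ gx_alg (JrT _ _ fu_alg JT).
rewrite rank_one_sandwich // in J_sandwich; last by case: (Jbounded _ JT).
have -> : rank_one f x = (fun y => (g (T u))^-1 *: (g (T u) *: rank_one f x y)).
  by apply: funext => y; rewrite scalerA mulVf ?scale1r.
exact: bimoduleZ bimodJ J_sandwich.
Qed.
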